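(* Let $L\in\{1,2,\dots,q-1\}$, let $\mathcal C$ be a linear $[n,k]$ code over $F=\mathrm{GF}(q)$, and let $\tau\in\mathbb Z_{\ge 0}$ satisfy $\tau\ge \frac{L(n-k)}{L+1}$. If $\mathcal C$ is $(\tau,L)$-list decodable, then $\mathcal C$ is MDS (i.e., its minimum distance is $n-k+1$).
   Context: $F=\mathrm{GF}(q)$. For $L\in\mathbb Z^+$ and $\tau\in\mathbb Z_{\ge0}$, a code $\mathcal C\subseteq F^n$ is $(\tau,L)$-list decodable if for every $y\in F^n$ at most $L$ codewords of $\mathcal C$ lie at Hamming distance at most $\tau$ from $y$. *)

From HB Require Import structures.
From mathcomp Require Import all_boot all_order all_algebra all_field.
Set Implicit Arguments. Unset Strict Implicit. Unset Printing Implicit Defensive.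
Import GRing.Theory.
Local Open Scope ring_scope.

Definition hwt (F : finFieldType) (n : nat) (v : 'rV[F]_n) : nat :=
  #|[set i : 'I_n | v ord0 i != 0]|.

Definition hdist (F : finFieldType) (n : nat) (u v : 'rV[F]_n) : nat :=
  #|[set i : 'I_n | u ord0 i != v ord0 i]|.

Definition list_decodable (F : finFieldType) (n : nat)
    (C : {pred 'rV[F]_n}) (tau L : nat) : Prop :=
  forall y : 'rV[F]_n,
    (#|[set c : 'rV[F]_n | (c \in C) && (hdist c y <= tau)%N]| <= L)%N.

Definition min_distance_is (F : finFieldType) (n : nat)
    (C : {vspace 'rV[F]_n}) (d : nat) : Prop :=
  (exists2 c : 'rV[F]_n, (c \in C) && (c != 0) & hwt c = d) /\
  (forall c : 'rV[F]_n, c \in C -> c != 0 -> (d <= hwt c)%N).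

From HB Require Import structures.
From mathcomp Require Import all_boot all_order all_algebra all_field.
From mathcomp Require Import zify.
Set Implicit Arguments. Unset Strict Implicit. Unset Printing Implicit Defensive.
Import GRing.Theory.
Local Open Scope ring_scope.

(* Singleton bound: a nonzero codeword vanishing on k - 1 coordinates has weight
   at most n - k + 1. Conversely, if some nonzero codeword c had weight w <= n - k,
   split its support into L + 1 blocks of at least w - tau positions each (possible
   since tau >= L (n - k) / (L + 1)) and let y agree with lam_j c on block j for
   L + 1 distinct scalars lam_j. Every lam_j c then differs from y only outside
   block j, i.e. in at most tau positions, so L + 1 codewords lie in the ball of
   radius tau around y. *)

Lemma subset_of_card (T : finType) (S : {set T}) (m : nat) : (m <= #|S|)%N ->
  exists2 A : {set T}, A \subset S & #|A| = m.
Proof.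
move=> hm; exists [set x in take m (enum S)].
  by apply/subsetP=> x; rewrite inE => /mem_take; rewrite mem_enum.
rewrite cardsE; have /card_uniqP -> : uniq (take m (enum S)).
  by rewrite take_uniq ?enum_uniq.
by rewrite size_takel // -cardE.
Qed.

Lemma exists_labelling_large_classes (T : finType) (m K : nat) (S : {set T}) :
  ((K + 1) * m <= #|S|)%N ->
  exists f : T -> nat, forall j, (j <= K)%N -> (m <= #|[set i in S | f i == j]|)%N.
Proof.
elim: K S => [|K IH] S hS.
  exists (fun=> 0%N) => j; rewrite leqn0 => /eqP ->.
  suff -> : [set i in S | 0%N == 0%N] = S by rewrite mul1n in hS.
  by apply/setP=> x; rewrite !inE eqxx andbT.
have [A AS cardA] := @subset_of_card _ S m ltac:(lia).
have [f hf] : exists f : T -> nat,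
    forall j, (j <= K)%N -> (m <= #|[set i in S :\: A | f i == j]|)%N.
  by apply: IH; rewrite cardsD (setIidPr AS); lia.
exists (fun i => if i \in A then K.+1 else f i) => j hj.
have [ltjK | ->] : (j < K.+1)%N \/ j = K.+1 by lia.
- apply: leq_trans (hf j ltac:(lia)) (subset_leq_card _).
  apply/subsetP=> x; rewrite !inE => /andP[/andP[xA xS] fx].
  by rewrite xS (negbTE xA).
- rewrite -cardA; apply: subset_leq_card; apply/subsetP=> x xA.
  by rewrite inE (subsetP AS x xA) xA eqxx.
Qed.

Section Singleton.

Variables (F : finFieldType) (n : nat).

Lemma hwt_vanishing_prefix (m : nat) (le_mn : (m <= n)%N) (c : 'rV[F]_n) :
  (forall j : 'I_m, c 0 (widen_ord le_mn j) = 0) -> (hwt c <= n - m)%N.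
Proof.
move=> c0; rewrite /hwt.
have sub : [set i | c 0 i != 0] \subset ~: [set widen_ord le_mn j | j in 'I_m].
  by apply/subsetP=> i; rewrite !inE; apply: contra => /imsetP[j _ ->]; rewrite c0.
apply: leq_trans (subset_leq_card sub) _.
have := cardsC [set widen_ord le_mn j | j in 'I_m].
rewrite card_imset ?card_ord; first lia.
by move=> x y /(congr1 val) /= /val_inj.
Qed.

(* Rank-nullity for the projection of C onto its first m coordinates. *)
Lemma codeword_vanishing_prefix (C : {vspace 'rV[F]_n}) (m : nat)
    (le_mn : (m <= n)%N) : (m < \dim C)%N ->
  exists2 c : 'rV[F]_n, (c \in C) && (c != 0) &
    forall j : 'I_m, c 0 (widen_ord le_mn j) = 0.
Proof.
move=> lt_m_dimC.
pose P : 'M[F]_(n, m) := \matrix_(i, j) (i == widen_ord le_mn j)%:R.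
pose f : 'Hom('rV[F]_n, 'rV[F]_m) := linfun (mulmxr P).
have dim_img : (\dim (f @: C) <= m)%N.
  by have := dimvS (subvf (f @: C)); rewrite dimvf /dim /= mul1n.
have : (C :&: lker f)%VS != 0%VS.
  (* Not closed by lia directly: the two occurrences of \dim (f @: C) carry
     different, convertible, structure instances. *)
  have pos_of_sum (a b d : nat) : (b <= m)%N -> (a + b)%N = d -> (m < d)%N -> (0 < a)%N.
    by lia.
  by rewrite -dimv_eq0 -lt0n; apply: pos_of_sum dim_img (limg_ker_dim f C) _.
move=> CK_neq0; have c_neq0 : vpick (C :&: lker f)%VS != 0 by rewrite vpick0.
have := memv_pick (C :&: lker f)%VS.
set c := vpick _ in c_neq0 *; rewrite memv_cap memv_ker lfunE /=.
case/andP=> cC /eqP cP0; exists c; first by rewrite cC c_neq0.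
move=> j; have := congr1 (fun v : 'rV_m => v 0 j) cP0.
rewrite /= mxE (bigD1 (widen_ord le_mn j)) //= mxE eqxx mulr1.
rewrite big1 ?addr0 ?mxE // => i /negbTE ne_ij.
by rewrite mxE ne_ij mulr0.
Qed.

Lemma singleton_codeword (C : {vspace 'rV[F]_n}) : (0 < \dim C)%N ->
  exists2 c : 'rV[F]_n, (c \in C) && (c != 0) & (hwt c <= n - (\dim C).-1)%N.
Proof.
move=> dimC_gt0.
have le_dimC_n : (\dim C <= n)%N.
  by have := dimvS (subvf C); rewrite dimvf /dim /= mul1n.
have le_mn : ((\dim C).-1 <= n)%N by lia.
have [c cC c0] := @codeword_vanishing_prefix C _ le_mn ltac:(lia).
by exists c => //; apply: hwt_vanishing_prefix c0.
Qed.

End Singleton.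

Section ListDecoding.

Variables (F : finFieldType) (n : nat).

Lemma nth_enum_inj (a b : nat) : (a < #|F|)%N -> (b < #|F|)%N ->
  nth 0 (enum F) a = nth 0 (enum F) b -> a = b.
Proof.
rewrite cardE => ha hb /eqP.
by rewrite nth_uniq ?enum_uniq // => /eqP.
Qed.

Lemma close_multiples (c : 'rV[F]_n) (L tau : nat) :
  c != 0 -> (L < #|F|)%N -> ((L + 1) * (hwt c - tau) <= hwt c)%N ->
  exists y : 'rV[F]_n,
    (L < #|[set x | (x \in <[c]>%VS) && (hdist x y <= tau)%N]|)%N.
Proof.
move=> c_neq0 lt_L_F hblocks.
set S := [set i | c 0 i != 0].
have [f hf] := exists_labelling_large_classes hblocks.
pose lam (j : nat) : F := nth 0 (enum F) j.
pose y : 'rV[F]_n := \row_i (lam (f i) * c 0 i).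
have close j : (j <= L)%N -> (hdist (lam j *: c) y <= tau)%N.
  move=> le_jL; rewrite /hdist.
  have sub : [set i | (lam j *: c) 0 i != y 0 i] \subset
             S :\: [set i in S | f i == j].
    apply/subsetP=> i; rewrite !inE !mxE.
    have [->|ci_neq0] := eqVneq (c 0 i) 0; first by rewrite !mulr0 eqxx.
    by have [->|] := eqVneq (f i) j; rewrite ?eqxx.
  apply: leq_trans (subset_leq_card sub) _.
  have : (hwt c - tau <= #|[set i in S | f i == j]|)%N := hf j le_jL.
  rewrite cardsD (setIidPr _); last by apply/subsetP=> i; rewrite inE => /andP[].
  rewrite /hwt -/S; lia.
pose g (j : 'I_(L + 1)) := lam j *: c.
have g_inj : injective g.
  move=> a b /eqP; rewrite -subr_eq0 -scalerBl scaler_eq0 (negbTE c_neq0) orbF.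
  rewrite subr_eq0 => /eqP /nth_enum_inj eq_ab; apply/val_inj/eq_ab.
  - by have := ltn_ord a; lia.
  - by have := ltn_ord b; lia.
exists y; rewrite -addn1 -[(L + 1)%N]card_ord -(card_imset _ g_inj).
apply/subset_leq_card/subsetP=> _ /imsetP[j _ ->].
rewrite inE memvZ ?memv_line //=; apply: close.
by have := ltn_ord j; lia.
Qed.

Lemma list_decodable_hwt_gt (C : {vspace 'rV[F]_n}) (k L tau : nat) :
  (L < #|F|)%N -> (L * (n - k) <= (L + 1) * tau)%N ->
  list_decodable (fun c => c \in C) tau L ->
  forall c : 'rV[F]_n, c \in C -> c != 0 -> (n - k < hwt c)%N.
Proof.
move=> lt_L_F htau hdec c cC c_neq0; rewrite ltnNge; apply/negP => le_hwt.
have [y hy] : exists y : 'rV[F]_n,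
    (L < #|[set x | (x \in <[c]>%VS) && (hdist x y <= tau)%N]|)%N.
  by apply: close_multiples => //; nia.
suff /subset_leq_card : [set x | (x \in <[c]>%VS) && (hdist x y <= tau)%N] \subset
    [set x | (x \in C) && (hdist x y <= tau)%N].
  by move=> le_balls; have := leq_trans le_balls (hdec y); lia.
have /subvP line_sub_C : (<[c]> <= C)%VS by rewrite -memvE.
by apply/subsetP=> x; rewrite !inE => /andP[/line_sub_C -> ->].
Qed.

End ListDecoding.

Theorem mainTheorem1 (F : finFieldType) (q n k L tau : nat)
  (C : {vspace 'rV[F]_n})
  (hq : #|F| = q)
  (hk : \dim C = k) (hk0 : (0 < k)%N)
  (hL : (1 <= L <= q - 1)%N)
  (htau : (L * (n - k) <= (L + 1) * tau)%N)
  (hdec : list_decodable (fun c => c \in C) tau L) :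
  min_distance_is C (n - k + 1).
Proof.
have lt_L_F : (L < #|F|)%N by rewrite hq; lia.
have hwt_gt := list_decodable_hwt_gt lt_L_F htau hdec.
split; last by move=> c cC c_neq0; have := hwt_gt c cC c_neq0; lia.
have [c /andP[cC c_neq0] hwt_le] := @singleton_codeword F n C ltac:(lia).
exists c; first by rewrite cC c_neq0.
by have := hwt_gt c cC c_neq0; move: hwt_le; rewrite hk; lia.
Qed.
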